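(* Let $\mathcal{G}:H\rtimes G\rightrightarrows G$ be a Lie 2-group with Lie 2-algebra $\mathfrak{G}:\mathfrak{h}\rtimes\mathfrak{g}\rightrightarrows\mathfrak{g}$ given by the crossed module $\phi:\mathfrak{h}\to\mathfrak{g}$. Then the groupoid $\mathfrak{G}^*:(\mathfrak{h}\rtimes\mathfrak{g})^*\rightrightarrows\mathfrak{h}^*$, with group structure given by vector addition and with the Lie–Poisson structure on $(\mathfrak{h}\rtimes\mathfrak{g})^*$, is a Poisson 2-group.
   Context: A Lie 2-group is a groupoid object in the category of Lie groups; it is described by a crossed module of Lie groups, with arrow group $H\rtimes G$ (where $H=\ker\mathtt{s}$) and object group $G$. Its Lie 2-algebra is the action groupoid $\mathfrak{h}\rtimes\mathfrak{g}\rightrightarrows\mathfrak{g}$ of the crossed module of Lie algebras $\phi:\mathfrak{h}\to\mathfrak{g}$, with source $(a,x)\mapsto x$ and target $(a,x)\mapsto\phi(a)+x$. The groupoid $\mathfrak{G}^*$ has arrows $(\mathfrak{h}\rtimes\mathfrak{g})^*\cong\mathfrak{h}^*\times\mathfrak{g}^*$, objects $\mathfrak{h}^*$, source $\mathtt{s}(\alpha,\theta)=\alpha-\phi^*(\theta)$, target $\mathtt{t}(\alpha,\theta)=\alpha$, and multiplication $(\alpha,\theta)\cdot(\alpha-\phi^*\theta,\theta')=(\alpha,\theta+\theta')$ (the action groupoid of $\mathfrak{g}^*$ acting on $\mathfrak{h}^*$ by translations via $-\phi^*$, with source and target reversed). The Lie–Poisson structure on the dual $\mathfrak{k}^*$ of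 a Lie algebra $\mathfrak{k}$ is $\{f,g\}(\xi)=\langle\xi,[df_\xi,dg_\xi]\rangle$. A Poisson groupoid is a Lie groupoid with a Poisson structure on its arrows whose multiplication graph is coisotropic in $M_1\times M_1\times\overline{M_1}$; a Poisson 2-group is a Lie 2-group that is a Poisson groupoid and whose arrow group is a Poisson–Lie group with the same bivector. *)

From HB Require Import structures.
From mathcomp Require Import all_boot all_order all_algebra.
Set Implicit Arguments. Unset Strict Implicit. Unset Printing Implicit Defensive.
Import Order.TTheory GRing.Theory Num.Theory.
Local Open Scope ring_scope.

Section Defs.
Variable R : realFieldType.

Definition bilinear_map (U V W : lmodType R) (f : U -> V -> W) : Prop :=
  (forall (a : R) x y z, f (a *: x + y) z = a *: f x z + f y z) /\
  (forall (a : R) x y z, f z (a *: x + y) = a *: f z x + f z y).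

Definition lie_bracket (V : lmodType R) (br : V -> V -> V) : Prop :=
  [/\ bilinear_map br,
      forall x, br x x = 0 &
      forall x y z, br x (br y z) + br y (br z x) + br z (br x y) = 0].

Definition crossed_module (hT gT : vectType R) (brh : hT -> hT -> hT)
    (brg : gT -> gT -> gT) (act : gT -> hT -> hT) (phi : 'Hom(hT, gT)) : Prop :=
  lie_bracket brh /\ lie_bracket brg /\ bilinear_map act /\
  (forall x y a, act (brg x y) a = act x (act y a) - act y (act x a)) /\
  (forall x a b, act x (brh a b) = brh (act x a) b + brh a (act x b)) /\
  (forall x a, phi (act x a) = brg x (phi a)) /\
  (forall a b, act (phi a) b = brh a b).

Definition sd_bracket (hT gT : vectType R) (brh : hT -> hT -> hT)
    (brg : gT -> gT -> gT) (act : gT -> hT -> hT) (p q : hT * gT) : hT * gT :=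
  (brh p.1 q.1 + act p.2 q.1 - act q.2 p.1, brg p.2 q.2).

Definition dual (V : vectType R) := 'Hom(V, R^o).

(* identification (h ⋊ g)^* = h^* x g^* via this pairing *)
Definition arr_pair (hT gT : vectType R) (p : dual hT * dual gT) (u : hT * gT) : R :=
  (p.1 u.1 : R) + (p.2 u.2 : R).

Definition phistar (hT gT : vectType R) (phi : 'Hom(hT, gT)) (th : dual gT)
  : dual hT := (th \o phi)%VF.

Definition src (hT gT : vectType R) (phi : 'Hom(hT, gT))
  (p : dual hT * dual gT) : dual hT := p.1 - phistar phi p.2.
Definition tgt (hT gT : vectType R) (p : dual hT * dual gT) : dual hT := p.1.
(* (al, th) . (al - phi^* th, th') = (al, th + th'); only meaningful on
   composable pairs *)
Definition gmul (hT gT : vectType R) (p q : dual hT * dual gT)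
  : dual hT * dual gT := (p.1, p.2 + q.2).
Definition gunit (hT gT : vectType R) (al : dual hT) : dual hT * dual gT :=
  (al, 0).
Definition ginv (hT gT : vectType R) (phi : 'Hom(hT, gT))
  (p : dual hT * dual gT) : dual hT * dual gT := (p.1 - phistar phi p.2, - p.2).

(* ---------- Poisson structures on vector spaces ----------
   A vector space M whose cotangent spaces are all identified with C through
   a pairing pair : M -> C -> R.  A bivector field is pi : M -> C -> C -> R,
   pi p u v = pi_p(u, v). *)

(* Lie-Poisson structure on k^*: pi_xi(x, y) = <xi, [x, y]>, i.e.
   {f, g}(xi) = <xi, [df_xi, dg_xi]>. *)
Definition lie_poisson (K Kd : Type) (pair : Kd -> K -> R) (br : K -> K -> K)
  (xi : Kd) (x y : K) : R := pair xi (br x y).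

Definition prod_pair (M N CM CN : Type) (pM : M -> CM -> R) (pN : N -> CN -> R)
  (x : M * N) (u : CM * CN) : R := pM x.1 u.1 + pN x.2 u.2.
Definition prod_pi (M N CM CN : Type) (piM : M -> CM -> CM -> R)
  (piN : N -> CN -> CN -> R) (x : M * N) (u v : CM * CN) : R :=
  piM x.1 u.1 v.1 + piN x.2 u.2 v.2.
Definition opp_pi (M CM : Type) (pi : M -> CM -> CM -> R) (x : M) (u v : CM) : R :=
  - pi x u v.

(* A linear map F : M -> N is Poisson: for every point m and covectors u, v
   at F m, pi_N(F m)(u, v) = pi_M(m)(F^* u, F^* v), where F^* u is the pullback
   covector, characterized by <x, F^* u> = <F x, u>. *)
Definition poisson_map (M N CM CN : Type) (pM : M -> CM -> R) (pN : N -> CN -> R)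
  (piM : M -> CM -> CM -> R) (piN : N -> CN -> CN -> R) (F : M -> N) : Prop :=
  forall m (u v : CN) (u' v' : CM),
    (forall x, pM x u' = pN (F x) u) -> (forall x, pM x v' = pN (F x) v) ->
    piN (F m) u v = piM m u' v'.

(* A linear subspace C of M is coisotropic: for every point p of C and every
   conormal covector u (annihilating T_p C = C), pi^sharp_p(u) lies in T_p C = C. *)
Definition coisotropic (M CM : Type) (pM : M -> CM -> R)
  (pi : M -> CM -> CM -> R) (C : M -> Prop) : Prop :=
  forall p, C p -> forall u : CM, (forall c, C c -> pM c u = 0) ->
    exists c, C c /\ forall w, pM c w = pi p u w.

Definition groupoid (M1 M0 : Type) (s t : M1 -> M0) (e : M0 -> M1)
  (inv : M1 -> M1) (mul : M1 -> M1 -> M1) : Prop :=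
  [/\ (forall a b, s a = t b -> s (mul a b) = s b /\ t (mul a b) = t a),
      (forall a b c, s a = t b -> s b = t c -> mul (mul a b) c = mul a (mul b c)),
      (forall x, s (e x) = x /\ t (e x) = x),
      (forall a, mul (e (t a)) a = a /\ mul a (e (s a)) = a) &
      (forall a, [/\ s (inv a) = t a, t (inv a) = s a,
                     mul a (inv a) = e (t a) & mul (inv a) a = e (s a)])].

(* groupoid object in (abelian, here vector) groups: all structure maps are
   group homomorphisms; multiplication on the subgroup of composable pairs. *)
Definition two_group (M1 M0 : zmodType) (s t : M1 -> M0) (e : M0 -> M1)
  (inv : M1 -> M1) (mul : M1 -> M1 -> M1) : Prop :=
  [/\ groupoid s t e inv mul,
      (forall a b, s (a + b) = s a + s b /\ t (a + b) = t a + t b),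
      (forall x y, e (x + y) = e x + e y),
      (forall a b, inv (a + b) = inv a + inv b) &
      (forall a b a' b', s a = t b -> s a' = t b' ->
         mul (a + a') (b + b') = mul a b + mul a' b')].

(* Poisson groupoid: graph of multiplication coisotropic in M1 x M1 x \bar M1 *)
Definition poisson_groupoid (M1 M0 C : Type) (s t : M1 -> M0)
  (mul : M1 -> M1 -> M1) (pair : M1 -> C -> R) (pi : M1 -> C -> C -> R) : Prop :=
  coisotropic (prod_pair (prod_pair pair pair) pair)
              (prod_pi (prod_pi pi pi) (opp_pi pi))
              (fun x : M1 * M1 * M1 => s x.1.1 = t x.1.2 /\ x.2 = mul x.1.1 x.1.2).

Definition poisson_lie_additive (M1 : zmodType) (C : Type) (pair : M1 -> C -> R)
  (pi : M1 -> C -> C -> R) : Prop :=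
  poisson_map (prod_pair pair pair) pair (prod_pi pi pi) pi
              (fun x : M1 * M1 => x.1 + x.2).

Definition poisson_2group (M1 M0 : zmodType) (C : Type) (s t : M1 -> M0)
  (e : M0 -> M1) (inv : M1 -> M1) (mul : M1 -> M1 -> M1)
  (pair : M1 -> C -> R) (pi : M1 -> C -> C -> R) : Prop :=
  [/\ two_group s t e inv mul, poisson_groupoid s t mul pair pi &
      poisson_lie_additive pair pi].

End Defs.

(* The multiplication graph Gamma of G^* is a linear subspace of the cube of
   h^* x g^*, and for a Lie-Poisson structure a linear subspace is coisotropic
   as soon as its annihilator is a Lie subalgebra: then pi^#_p(u) = <p, [u, -]>
   kills Gamma^perp, hence lies in Gamma^perp^perp = Gamma.  Up to a sign on
   the last factor, Gamma^perp is the graph of the multiplication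
   (a, x) . (b, y) = (a + b, y) of the Lie 2-algebra h x| g => g, and the
   Peiffer identity together with the equivariance of phi make this
   multiplication a Lie algebra morphism on composable pairs.  The group law is
   vector addition, which is Poisson because the Lie-Poisson bivector depends
   linearly on the point. *)

From mathcomp Require Import all_boot all_order all_algebra.
From mathcomp Require Import lra.
Import GRing.Theory.
Set Implicit Arguments. Unset Strict Implicit.
Local Open Scope ring_scope.

Section LinearPoisson.
Variables (R : realFieldType) (M K : Type) (pair : M -> K -> R).

Definition conormal (C : M -> Prop) (u : K) : Prop :=
  forall c, C c -> pair c u = 0.

Lemma lie_poisson_coisotropic (br : K -> K -> K) (pi : M -> K -> K -> R)
    (C : M -> Prop) :
  (forall p u v, pi p u v = pair p (br u v)) ->
  (forall p u, exists c, forall w, pair c w = pair p (br u w)) ->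
  (forall u v, conormal C u -> conormal C v -> conormal C (br u v)) ->
  (forall c, (forall u, conormal C u -> pair c u = 0) -> C c) ->
  coisotropic pair pi C.
Proof.
move=> piE coad_ex br_conormal biperp p Cp u Cu.
have [c cE] := coad_ex p u.
exists c; split=> [|w]; last by rewrite cE piE.
by apply: biperp => v Cv; rewrite cE (br_conormal _ _ Cu Cv).
Qed.

End LinearPoisson.

Lemma lie_poisson_additive (R : realFieldType) (M : zmodType) (K : Type)
    (pair : M -> K -> R) (br : K -> K -> K) :
  (forall w, {morph pair^~ w : x y / x + y}) ->
  (forall u u', (forall x, pair x u = pair x u') -> u = u') ->
  poisson_lie_additive pair (lie_poisson pair br).
Proof.
move=> pairD pair_inj [m1 m2] u v u' v' u'E v'E.
have pair0 w : pair 0 w = 0.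
  by apply: (@addrI _ (pair 0 w)); rewrite -pairD !addr0.
have pullback_addE (w : K) (w' : K * K) :
    (forall x, prod_pair pair pair x w' = pair (x.1 + x.2) w) -> w' = (w, w).
  case: w' => w1 w2 w'E; congr (_, _); apply: pair_inj => x.
    by have := w'E (x, 0); rewrite /prod_pair /= pair0 !addr0.
  by have := w'E (0, x); rewrite /prod_pair /= pair0 !add0r.
rewrite (pullback_addE _ _ u'E) (pullback_addE _ _ v'E).
by rewrite /prod_pi /lie_poisson pairD.
Qed.

Section DualSpace.
Variables (R : realFieldType) (V : vectType R).

Lemma lfun_of_linear (f : V -> R) :
  (forall a x y, f (a *: x + y) = a * f x + f y) ->
  exists g : 'Hom(V, R^o), forall v, g v = f v.
Proof.
move=> f_lin.
have f0 : f 0 = 0.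
  have := f_lin 1 0 0; rewrite scale1r !addr0 mul1r.
  by rewrite -{1}[f 0]addr0 => /addrI <-.
have fD x y : f (x + y) = f x + f y.
  by have := f_lin 1 x y; rewrite scale1r mul1r.
pose X := vbasis (fullv : {vspace V}).
exists (\sum_(i < \dim (fullv : {vspace V}))
          f X`_i *: linfun (coord X i : V -> R^o)).
move=> v; rewrite sum_lfunE {2}(coord_vbasis (memvf v)) (big_morph f fD f0).
apply: eq_bigr => i _; rewrite scale_lfunE lfunE /=.
by rewrite -[_ *: X`_i]addr0 f_lin f0 addr0 mulrC.
Qed.

Lemma dual_separates (x : V) :
  (forall g : 'Hom(V, R^o), g x = 0) -> x = 0.
Proof.
move=> gx0; rewrite (coord_vbasis (memvf x)); apply: big1 => i _.
move: (gx0 (linfun (coord (vbasis fullv) i : V -> R^o))).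
by rewrite lfunE /= => ->; rewrite scale0r.
Qed.

End DualSpace.

Section Bilinear.
Variables (R : realFieldType) (U V W : lmodType R) (f : U -> V -> W).
Hypothesis f_bilin : bilinear_map f.

Lemma bilinearDl x y z : f (x + y) z = f x z + f y z.
Proof. by have := f_bilin.1 1 x y z; rewrite !scale1r. Qed.

Lemma bilinearDr x y z : f z (x + y) = f z x + f z y.
Proof. by have := f_bilin.2 1 x y z; rewrite !scale1r. Qed.

Lemma bilinear0l z : f 0 z = 0.
Proof. by apply: (@addrI _ (f 0 z)); rewrite -bilinearDl !addr0. Qed.

Lemma bilinear0r z : f z 0 = 0.
Proof. by apply: (@addrI _ (f z 0)); rewrite -bilinearDr !addr0. Qed.

Lemma bilinearNN x y : f (- x) (- y) = f x y.
Proof.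
have Nl a b : f (- a) b = - f a b.
  by apply/eqP; rewrite -addr_eq0 -bilinearDl addNr bilinear0l.
have Nr a b : f a (- b) = - f a b.
  by apply/eqP; rewrite -addr_eq0 -bilinearDr addNr bilinear0r.
by rewrite Nl Nr opprK.
Qed.

End Bilinear.

Lemma lie_bracket_anti (R : realFieldType) (V : lmodType R) (br : V -> V -> V) :
  lie_bracket br -> forall x y, br y x = - br x y.
Proof.
move=> [br_bilin br_alt _] x y; apply/eqP; rewrite -addr_eq0.
move: (br_alt (x + y)).
rewrite (bilinearDl br_bilin) !(bilinearDr br_bilin) !br_alt add0r addr0.
by rewrite addrC => ->.
Qed.

Section DualGroupoid.
Variables (R : realFieldType) (hT gT : vectType R) (phi : 'Hom(hT, gT)).

Definition lie2_src (p : hT * gT) : gT := p.2.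
Definition lie2_tgt (p : hT * gT) : gT := phi p.1 + p.2.
Definition lie2_mul (p q : hT * gT) : hT * gT := (p.1 + q.1, q.2).

Lemma dual_groupoid :
  groupoid (src phi) (@tgt R hT gT) (@gunit R hT gT) (ginv phi)
    (@gmul R hT gT).
Proof.
rewrite /src /tgt /gunit /ginv /gmul /phistar; split=> /=.
- by move=> [a1 a2] [b1 b2] /= <-; rewrite comp_lfunDl opprD addrA.
- by move=> a b c _ _; rewrite addrA.
- by move=> x; rewrite comp_lfun0l subr0.
- by move=> [a1 a2]; rewrite add0r addr0.
- by move=> [a1 a2]; rewrite comp_lfunNl opprK subrK subrr addNr.
Qed.

Lemma dual_two_group :
  two_group (src phi) (@tgt R hT gT) (@gunit R hT gT) (ginv phi)
    (@gmul R hT gT).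
Proof.
split; first exact: dual_groupoid.
- by move=> [a1 a2] [b1 b2]; rewrite /src /phistar /= comp_lfunDl opprD addrACA.
- by move=> x y; rewrite /gunit -[RHS]/(x + y, 0 + 0) addr0.
- move=> [a1 a2] [b1 b2].
  by rewrite /ginv /phistar /= comp_lfunDl !opprD addrACA.
- move=> [a1 a2] [b1 b2] [c1 c2] [d1 d2] _ _.
  by rewrite /gmul -[RHS]/(a1 + c1, a2 + b2 + (c2 + d2)) /= addrACA.
Qed.

Lemma arr_pairDl w : {morph (@arr_pair R hT gT)^~ w : p q / p + q}.
Proof. by move=> [p1 p2] [q1 q2]; rewrite /arr_pair /= !add_lfunE addrACA. Qed.

Lemma arr_pairNl (p : dual hT * dual gT) w : arr_pair (- p) w = - arr_pair p w.
Proof. by case: p => [p1 p2]; rewrite /arr_pair /= !opp_lfunE opprD. Qed.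

Lemma arr_pairNr (p : dual hT * dual gT) w : arr_pair p (- w) = - arr_pair p w.
Proof. by case: w => [w1 w2]; rewrite /arr_pair /= !linearN opprD. Qed.

Lemma arr_pair_inj (u u' : hT * gT) :
  (forall p : dual hT * dual gT, arr_pair p u = arr_pair p u') -> u = u'.
Proof.
case: u u' => [u1 u2] [u1' u2'] uE.
congr (_, _); apply/eqP; rewrite -subr_eq0; apply/eqP.
  apply: dual_separates => g; have := uE (g, 0).
  by rewrite /arr_pair /= !lfunE /= !addr0 linearB /= => ->; rewrite subrr.
apply: dual_separates => g; have := uE (0, g).
by rewrite /arr_pair /= !lfunE /= !add0r linearB /= => ->; rewrite subrr.
Qed.

Local Notation arr := (dual hT * dual gT)%type.
Local Notation cov := (hT * gT)%type.

Definition dual_mul_graph (x : arr * arr * arr) : Prop :=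
  src phi x.1.1 = tgt x.1.2 /\ x.2 = gmul x.1.1 x.1.2.

Definition arr3_pair : arr * arr * arr -> cov * cov * cov -> R :=
  prod_pair (prod_pair (@arr_pair R hT gT) (@arr_pair R hT gT))
            (@arr_pair R hT gT).

(* The annihilator of [dual_mul_graph]: triples (U, V, -(U . V)) for composable
   arrows U, V of the Lie 2-algebra; the sign absorbs the opposite Poisson
   structure on the third factor. *)
Definition lie2_mul_graphN (u : cov * cov * cov) : Prop :=
  lie2_src u.1.1 = lie2_tgt u.1.2 /\ u.2 = - lie2_mul u.1.1 u.1.2.

Lemma arr3_pair_dual_mul_graph (al : dual hT) (th th' : dual gT) u :
  arr3_pair (((al, th), (al - phistar phi th, th')), (al, th + th')) u =
  al (u.1.1.1 + u.1.2.1 + u.2.1) + th (u.1.1.2 + u.2.2 - phi u.1.2.1) +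
  th' (u.1.2.2 + u.2.2).
Proof.
case: u => [[[x1 y1] [x2 y2]] [x3 y3]].
rewrite /arr3_pair /prod_pair /arr_pair /phistar /=.
rewrite !add_lfunE opp_lfunE comp_lfunE.
rewrite !linearD linearN /=; lra.
Qed.

Lemma arr3_pair_lie2_mul_graphN (c : arr * arr * arr) x1 x2 y2 :
  arr3_pair c (((x1, phi x2 + y2), (x2, y2)), - (x1 + x2, y2)) =
  (c.1.1.1 - c.2.1) x1 + (phistar phi c.1.1.2 + c.1.2.1 - c.2.1) x2 +
  (c.1.1.2 + c.1.2.2 - c.2.2) y2.
Proof.
case: c => [[[a1 t1] [a2 t2]] [a3 t3]].
rewrite /arr3_pair /prod_pair /arr_pair /phistar /=.
rewrite !add_lfunE !opp_lfunE comp_lfunE.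
rewrite !linearD !linearN /=; lra.
Qed.

Lemma conormal_dual_mul_graphP u :
  conormal arr3_pair dual_mul_graph u <-> lie2_mul_graphN u.
Proof.
case: u => [[[x1 y1] [x2 y2]] [x3 y3]].
rewrite /lie2_mul_graphN /lie2_src /lie2_tgt /lie2_mul /=.
split=> [u_perp|[-> ->]].
  have perp (al : dual hT) (th th' : dual gT) :
      al (x1 + x2 + x3) + th (y1 + y3 - phi x2) + th' (y2 + y3) = 0.
    rewrite -(u_perp (((al, th), (al - phistar phi th, th')), (al, th + th')))
      ?arr3_pair_dual_mul_graph //.
  have X0 : x1 + x2 + x3 = 0.
    by apply: dual_separates => g; have := perp g 0 0; rewrite !lfunE /= !addr0.
  have Y0 : y1 + y3 - phi x2 = 0.
    apply: dual_separates => g.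
    by have := perp 0 g 0; rewrite !lfunE /= add0r addr0.
  have Z0 : y2 + y3 = 0.
    by apply: dual_separates => g; have := perp 0 0 g; rewrite !lfunE /= !add0r.
  rewrite -(addr0_eq X0) -(addr0_eq Z0); split=> //.
  by move/subr0_eq: Y0; rewrite -(addr0_eq Z0) => <-; rewrite subrK.
move=> [[[a t] [a' t']] c3].
rewrite /dual_mul_graph /src /tgt /gmul /= => -[<- ->].
by rewrite arr3_pair_dual_mul_graph /= subrr addrK !subrr !linear0 !addr0.
Qed.

Lemma dual_mul_graph_of_perp (c : arr * arr * arr) :
  (forall u, lie2_mul_graphN u -> arr3_pair c u = 0) -> dual_mul_graph c.
Proof.
case: c => [[[a1 t1] [a2 t2]] [a3 t3]] c_perp.
have perp x1 x2 y2 :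
    (a1 - a3) x1 + (phistar phi t1 + a2 - a3) x2 + (t1 + t2 - t3) y2 = 0.
  rewrite -(arr3_pair_lie2_mul_graphN (a1, t1, (a2, t2), (a3, t3))).
  by apply: c_perp.
have A0 : a1 - a3 = 0.
  apply/lfunP => x; rewrite zero_lfunE.
  by have := perp x 0 0; rewrite !linear0 !addr0.
have B0 : phistar phi t1 + a2 - a3 = 0.
  apply/lfunP => x; rewrite zero_lfunE.
  by have := perp 0 x 0; rewrite !linear0 addr0 add0r.
have T0 : t1 + t2 - t3 = 0.
  apply/lfunP => x; rewrite zero_lfunE.
  by have := perp 0 0 x; rewrite !linear0 !add0r.
rewrite /dual_mul_graph /src /tgt /gmul /= (subr0_eq A0) -(subr0_eq T0).
by rewrite -(subr0_eq B0) addrC addKr.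
Qed.

End DualGroupoid.

Section CrossedModule.
Variables (R : realFieldType) (hT gT : vectType R).
Variables (brh : hT -> hT -> hT) (brg : gT -> gT -> gT) (act : gT -> hT -> hT).
Variable phi : 'Hom(hT, gT).
Hypotheses (brh_lie : lie_bracket brh) (brg_lie : lie_bracket brg).
Hypothesis act_bilin : bilinear_map act.
Hypothesis phi_act : forall x a, phi (act x a) = brg x (phi a).
Hypothesis peiffer : forall a b, act (phi a) b = brh a b.

Local Notation sd := (sd_bracket brh brg act).
Local Notation lie2_tgt := (lie2_tgt phi).
Local Notation lie2_mul_graphN := (lie2_mul_graphN phi).

Lemma phi_bracket a b : phi (brh a b) = brg (phi a) (phi b).
Proof. by rewrite -peiffer phi_act. Qed.

Lemma sd_bracketNN p q : sd (- p) (- q) = sd p q.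
Proof.
have [[brh_bilin _ _] [brg_bilin _ _]] := (brh_lie, brg_lie).
by rewrite /sd_bracket /= !bilinearNN.
Qed.

Lemma lie2_composable_bracket U V U' V' :
  lie2_src U = lie2_tgt V -> lie2_src U' = lie2_tgt V' ->
  lie2_src (sd U U') = lie2_tgt (sd V V').
Proof.
case: U V U' V' => [x1 y1] [x2 y2] [a1 b1] [a2 b2].
rewrite /lie2_src /lie2_tgt /sd_bracket /= => -> ->.
have [brg_bilin _ _] := brg_lie.
rewrite !linearD linearN /= phi_bracket !phi_act.
rewrite (bilinearDl brg_bilin) !(bilinearDr brg_bilin).
rewrite (lie_bracket_anti brg_lie b2).
by rewrite (AC (2*2) (((1*3)*2)*4)).
Qed.

Lemma lie2_mul_bracket U V U' V' :
  lie2_src U = lie2_tgt V -> lie2_src U' = lie2_tgt V' ->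
  lie2_mul (sd U U') (sd V V') = sd (lie2_mul U V) (lie2_mul U' V').
Proof.
case: U V U' V' => [x1 y1] [x2 y2] [a1 b1] [a2 b2].
rewrite /lie2_src /lie2_tgt /lie2_mul /sd_bracket /= => -> ->; congr (_, _).
have [brh_bilin _ _] := brh_lie.
rewrite !(bilinearDl act_bilin) !peiffer (lie_bracket_anti brh_lie x1 a2).
rewrite (bilinearDl brh_bilin) !(bilinearDr brh_bilin) !(bilinearDr act_bilin).
rewrite !opprD opprK.
by rewrite (AC (((1*2)*2)*3) ((((1*4)*(2*6))*(3*7))*(5*8))).
Qed.

Definition arr3_bracket (u v : (hT * gT) * (hT * gT) * (hT * gT)) :=
  ((sd u.1.1 v.1.1, sd u.1.2 v.1.2), - sd u.2 v.2).

Lemma lie2_mul_graphN_bracket u v :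
  lie2_mul_graphN u -> lie2_mul_graphN v -> lie2_mul_graphN (arr3_bracket u v).
Proof.
case: u v => [[U V] W] [[U' V'] W'] [/= UV ->] [/= UV' ->].
rewrite /lie2_mul_graphN /arr3_bracket /= sd_bracketNN.
by split; [apply: lie2_composable_bracket | rewrite lie2_mul_bracket].
Qed.

Lemma sd_coadjoint (p : dual hT * dual gT) u :
  exists c, forall w, arr_pair c w = arr_pair p (sd u w).
Proof.
have [[brh_bilin _ _] [brg_bilin _ _]] := (brh_lie, brg_lie).
case: p u => [al th] [x y].
have [ch chE] : exists ch : 'Hom(hT, R^o),
    forall w, ch w = al (brh x w + act y w).
  apply: lfun_of_linear => a w w'.
  by rewrite brh_bilin.2 act_bilin.2 addrACA -scalerDr linearP.
have [cg cgE] : exists cg : 'Hom(gT, R^o),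
    forall w, cg w = th (brg y w) - al (act w x).
  apply: lfun_of_linear => a w w'.
  by rewrite brg_bilin.2 act_bilin.1 !linearP /= scalerN addrACA mulrBr.
exists (ch, cg) => -[w1 w2].
by rewrite /arr_pair /sd_bracket /= chE cgE linearB /= addrAC addrA.
Qed.

Lemma arr3_coadjoint p u :
  exists c, forall w, arr3_pair c w = arr3_pair p (arr3_bracket u w).
Proof.
case: p u => [[p1 p2] p3] [[u1 u2] u3].
have [c1 c1E] := sd_coadjoint p1 u1.
have [c2 c2E] := sd_coadjoint p2 u2.
have [c3 c3E] := sd_coadjoint p3 u3.
exists ((c1, c2), - c3) => -[[w1 w2] w3].
rewrite /arr3_pair /prod_pair /arr3_bracket /=.
by rewrite c1E c2E arr_pairNl c3E arr_pairNr.
Qed.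

Lemma dual_mul_graph_coisotropic :
  poisson_groupoid (src phi) (@tgt R hT gT) (@gmul R hT gT) (@arr_pair R hT gT)
    (lie_poisson (@arr_pair R hT gT) sd).
Proof.
apply: (lie_poisson_coisotropic (pair := @arr3_pair R hT gT)
                                (br := arr3_bracket)).
- by move=> p u v; rewrite /arr3_pair /prod_pair /= arr_pairNr.
- exact: arr3_coadjoint.
- move=> u v /conormal_dual_mul_graphP Gu /conormal_dual_mul_graphP Gv.
  by apply/conormal_dual_mul_graphP; apply: lie2_mul_graphN_bracket.
- move=> c c_perp; apply: dual_mul_graph_of_perp => u.
  by move/conormal_dual_mul_graphP; apply: c_perp.
Qed.

End CrossedModule.

Theorem mainTheorem5 (R : realFieldType) (hT gT : vectType R)
  (brh : hT -> hT -> hT) (brg : gT -> gT -> gT) (act : gT -> hT -> hT)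
  (phi : 'Hom(hT, gT)) :
  crossed_module brh brg act phi ->
  poisson_2group (src phi) (@tgt R hT gT) (@gunit R hT gT) (ginv phi)
    (@gmul R hT gT) (@arr_pair R hT gT)
    (lie_poisson (@arr_pair R hT gT) (sd_bracket brh brg act)).
Proof.
move=> [brh_lie [brg_lie [act_bilin [_ [_ [phi_act peiffer]]]]]].
split.
- exact: dual_two_group.
- exact: dual_mul_graph_coisotropic.
- by apply: lie_poisson_additive; [exact: arr_pairDl | exact: arr_pair_inj].
Qed.
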